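(* Let $m\ge 1$ and let $F_0=[1,m-1]\supseteq F_1\supseteq F_2$ be sets such that $G=F_0\cup(m+F_1)\cup(2m+F_2)$ is a gapset; let $g=|F_0|+|F_1|+|F_2|$ (the genus of $G$). Define $$\alpha_1(F)=(F_0\sqcup\{m\},F_1,F_2),\qquad \alpha_2(F)=(F_0\sqcup\{m\},F_1\sqcup\{m\},F_2).$$ Then $\alpha_1(F)$ and $\alpha_2(F)$ are gapset filtrations of multiplicity $m+1$ and depth at most $3$, of genus $g+1$ and $g+2$ respectively; that is, $H=[1,m]\cup((m+1)+F_1)\cup(2(m+1)+F_2)$ is a gapset of genus $g+1$ and $H\cup\{2m+1\}$ is a gapset of genus $g+2$.
   Context: A gapset is a finite set $G \subset \mathbb{N}_+$ such that for all $z \in G$, whenever $z=x+y$ with $x,y\in\mathbb{N}_+$, we have $x\in G$ or $y\in G$. Its multiplicity is the least $m\ge1$ with $m\notin G$, its genus is $|G|$, and its depth is $\lceil c/m\rceil$ where $c=\max G+1$ ($c=0$ if $G=\emptyset$). For $m\ge1$, an $m$-filtration is a finite sequence $(F_0,\dots,F_t)$ of sets with $F_0=[1,m-1]\supseteq F_1\supseteq\dots\supseteq F_t$; it is called a gapset filtration if $\tau(F)=\bigcup_i (im+F_i)$ is a gapset; the multiplicity, genus and depth of the gapset filtration are those of $\tau(F)$ (so the genus is $\sum_i|F_i|$ and the multiplicity is $m$). Here $[a,b]=\{z\in\mathbb{Z}:a\le z\le b\}$ and $k+A=\{k+a:a\in A\}$. *)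

From mathcomp Require Import all_boot all_order.
From mathcomp Require Import finmap.
Set Implicit Arguments. Unset Strict Implicit. Unset Printing Implicit Defensive.
Local Open Scope fset_scope.

Definition interval (a b : nat) : {fset nat} := [fset z in iota a (b.+1 - a)].

Definition shift (k : nat) (A : {fset nat}) : {fset nat} := [fset (k + x)%N | x in A].

Definition is_gapset (G : {fset nat}) : Prop :=
  (forall z, z \in G -> 0 < z) /\
  (forall z x y, z \in G -> 0 < x -> 0 < y -> z = (x + y)%N -> x \in G \/ y \in G).

Definition is_multiplicity (G : {fset nat}) (m : nat) : Prop :=
  [/\ 1 <= m, m \notin G & forall k, 1 <= k < m -> k \in G].

Definition genus (G : {fset nat}) : nat := #|` G|.

Definition conductor (G : {fset nat}) : nat :=
  if G == fset0 then 0 else (\max_(x <- G) x).+1.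

(* depth = ceil(c / m) *)
Definition depth (G : {fset nat}) (m : nat) : nat := (conductor G + m.-1)%N %/ m.

Definition is_m_filtration (m : nat) (F : seq {fset nat}) : Prop :=
  [/\ 0 < size F, nth fset0 F 0 = interval 1 m.-1 &
      forall i, i.+1 < size F -> nth fset0 F i.+1 `<=` nth fset0 F i].

Definition tau (m : nat) (F : seq {fset nat}) : {fset nat} :=
  \big[fsetU/fset0]_(i < size F) shift (i * m)%N (nth fset0 F i).

Definition is_gapset_filtration (m : nat) (F : seq {fset nat}) : Prop :=
  is_m_filtration m F /\ is_gapset (tau m F).

From mathcomp Require Import all_boot all_order.
From mathcomp Require Import finmap.
From mathcomp Require Import zify.

Set Implicit Arguments.
Unset Strict Implicit.
Unset Printing Implicit Defensive.
Local Open Scope fset_scope.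
Local Open Scope nat_scope.

(* Let G = F0 ∪ (m+F1) ∪ (2m+F2) and H = [1,m] ∪ ((m+1)+E) ∪ (2(m+1)+F2) with
   E = F1 or E = F1 ∪ {m}.  A decomposition z = x + y of an element of H with
   x, y > m forces z into the top layer, and then (x-(m+1)) + (y-(m+1)) ∈ F2.
   Since 2m + (a+b) = (m+a) + (m+b) in G, the gapset property of G says that
   every such sum a + b ∈ F2 with a, b > 0 has a summand in F1 ⊆ E; the
   degenerate summand 0 is covered by F2 ⊆ F1 ⊆ E.  The layers of H are
   pairwise disjoint, which gives the genus. *)

Lemma mem_interval a b z : (z \in interval a b) = (a <= z <= b).
Proof. by rewrite /interval in_fset /= mem_iota; apply/idP/idP; lia. Qed.

Lemma card_interval a b : #|` interval a b| = b.+1 - a.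
Proof. by rewrite /interval card_imfset //= undup_id ?iota_uniq // size_iota. Qed.

Lemma mem_shift k A z : (z \in shift k A) = (k <= z) && (z - k \in A).
Proof.
apply/imfsetP/idP => /= [[x xA ->]|/andP[kz zkA]]; first by rewrite leq_addr addKn.
by exists (z - k); rewrite ?subnKC.
Qed.

Lemma card_shift k A : #|` shift k A| = #|` A|.
Proof. exact/card_imfset/addnI. Qed.

Lemma cardfsU_disjoint (K : choiceType) (A B : {fset K}) :
  [disjoint A & B]%fset -> #|` A `|` B| = #|` A| + #|` B|.
Proof. by move/eqP => AB0; rewrite -cardfsUI AB0 cardfs0 addn0. Qed.

Lemma tau3E k A B C : tau k [:: A; B; C] = A `|` shift k B `|` shift (2 * k) C.
Proof.
apply/fsetP => z; rewrite /tau /= !big_ord_recl big_ord0 /= mul0n mul1n.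
by rewrite !in_fsetU in_fset0 !mem_shift subn0 orbF orbA.
Qed.

Lemma conductor_le G c : {in G, forall z, z < c} -> conductor G <= c.
Proof.
rewrite /conductor => G_lt; case: eqP => // /eqP /fset0Pn [x /G_lt].
by case: c G_lt => // c G_lt _; apply/bigmax_leqP_seq => z /G_lt.
Qed.

Definition splits_in (F E : {fset nat}) : Prop :=
  forall a b, 0 < a -> 0 < b -> a + b \in F -> a \in E \/ b \in E.

Lemma splits_inS F E E' : E `<=` E' -> splits_in F E -> splits_in F E'.
Proof.
by move=> /fsubsetP sEE' splitF a b a_gt0 b_gt0 /(splitF _ _ a_gt0 b_gt0) [] /sEE';
  [left|right].
Qed.

Lemma gapset_splits m F1 F2 : F2 `<=` interval 1 m.-1 ->
  is_gapset (interval 1 m.-1 `|` shift m F1 `|` shift (2 * m) F2) ->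
  splits_in F2 F1.
Proof.
set G := _ `|` _ `|` _ => /fsubsetP F2_sub [_ Gdec] a b a_gt0 b_gt0 abF2.
have /F2_sub := abF2; rewrite mem_interval => ab_le.
have mid c : c < m -> m + c \in G -> c \in F1.
  rewrite !in_fsetU !mem_shift mem_interval addKn.
  by move=> c_lt /orP[/orP[c_le|/andP[_ //]]|/andP[c_ge _]]; exfalso; lia.
have top : 2 * m + (a + b) \in G.
  by rewrite in_fsetU (mem_shift (2 * m)) leq_addr addKn abF2 orbT.
have [||| aG | bG] := Gdec _ (m + a) (m + b) top; try lia.
- by left; apply: mid aG; lia.
- by right; apply: mid bG; lia.
Qed.

Section OneStepLift.

Variables (m : nat) (E F : {fset nat}).
Hypotheses (E_sub : E `<=` interval 1 m) (F_sub : F `<=` E) (F_splits : splits_in F E).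

Let H := tau m.+1 [:: interval 1 m; E; F].

Let E_range e : e \in E -> 0 < e <= m.
Proof. by move/(fsubsetP E_sub); rewrite mem_interval. Qed.

Let F_range f : f \in F -> 0 < f <= m.
Proof. by move/(fsubsetP F_sub)/E_range. Qed.

Lemma mem_lift z : (z \in H) =
  [|| 1 <= z <= m, (m.+1 <= z) && (z - m.+1 \in E) | (2 * m.+1 <= z) && (z - 2 * m.+1 \in F)].
Proof. by rewrite /H tau3E !in_fsetU !mem_shift mem_interval orbA. Qed.

Lemma mem_lift_bounds z : z \in H -> 0 < z < 3 * m.+1.
Proof.
by rewrite mem_lift => /or3P[|/andP[+ /E_range]|/andP[+ /F_range]]; lia.
Qed.

Lemma mem_lift_mid e : e \in E -> m.+1 + e \in H.
Proof. by move=> eE; rewrite mem_lift leq_addr addKn eE orbT. Qed.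

Lemma mem_lift_top z : 2 * m.+1 <= z -> z \in H -> z - 2 * m.+1 \in F.
Proof.
move=> z_ge; rewrite mem_lift => /or3P[z_le|/andP[_ /E_range e_le]|/andP[//]];
  exfalso; lia.
Qed.

Lemma lift_gapset : is_gapset H.
Proof.
split=> [z /mem_lift_bounds /andP[] // | z x y zH x_gt0 y_gt0 z_xy].
have [x_le|x_gt] := leqP x m; first by left; rewrite mem_lift x_gt0 x_le.
have [y_le|y_gt] := leqP y m; first by right; rewrite mem_lift y_gt0 y_le.
have [a x_eq] : exists a, x = m.+1 + a by exists (x - m.+1); rewrite subnKC.
have [b y_eq] : exists b, y = m.+1 + b by exists (y - m.+1); rewrite subnKC.
have abF : a + b \in F.
  have -> : a + b = z - 2 * m.+1 by lia.
  by apply: mem_lift_top zH; lia.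
rewrite x_eq y_eq.
have [a0|a_gt0] := posnP a.
  by right; apply/mem_lift_mid/(fsubsetP F_sub); rewrite a0 in abF.
have [b0|b_gt0] := posnP b.
  by left; apply/mem_lift_mid/(fsubsetP F_sub); rewrite b0 addn0 in abF.
by case: (F_splits a_gt0 b_gt0 abF) => /mem_lift_mid; [left|right].
Qed.

Lemma lift_filtration : is_m_filtration m.+1 [:: interval 1 m; E; F].
Proof. by split=> // -[|[|]]. Qed.

Lemma lift_multiplicity : is_multiplicity H m.+1.
Proof.
split=> // [|k]; last by rewrite ltnS mem_lift => ->.
by apply/negP; rewrite mem_lift => /or3P[|/andP[_ /E_range]|/andP[]]; lia.
Qed.

Lemma lift_depth : depth H m.+1 <= 3.
Proof.
have c_le : conductor H <= 3 * m.+1.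
  by apply: conductor_le => z /mem_lift_bounds /andP[].
by rewrite /depth -ltnS ltn_divLR //; lia.
Qed.

Lemma lift_genus : genus H = m + #|` E| + #|` F|.
Proof.
rewrite /genus /H tau3E !cardfsU_disjoint ?card_shift ?card_interval ?subn1 //.
  apply/fdisjointP => z; rewrite mem_interval mem_shift => z_le.
  by apply/negP => /andP[+ _]; lia.
apply/fdisjointP => z; rewrite in_fsetU mem_interval !mem_shift.
by move=> /orP[|/andP[_ /E_range]] z_le; apply/negP => /andP[+ _]; lia.
Qed.

Lemma lift_gapset_filtration :
  [/\ is_gapset_filtration m.+1 [:: interval 1 m; E; F], is_multiplicity H m.+1,
      depth H m.+1 <= 3 & genus H = m + #|` E| + #|` F|].
Proof.
exact: And4 (conj lift_filtration lift_gapset) lift_multiplicity lift_depth lift_genus.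
Qed.

End OneStepLift.

Theorem mainTheorem11 (m : nat) (F0 F1 F2 : {fset nat}) :
  1 <= m ->
  F0 = interval 1 m.-1 -> F1 `<=` F0 -> F2 `<=` F1 ->
  is_gapset (F0 `|` shift m F1 `|` shift (2 * m)%N F2) ->
  let g := (#|` F0| + #|` F1| + #|` F2|)%N in
  let a1 := [:: F0 `|` [fset m]; F1; F2] in
  let a2 := [:: F0 `|` [fset m]; F1 `|` [fset m]; F2] in
  [/\ is_gapset_filtration m.+1 a1,
      is_multiplicity (tau m.+1 a1) m.+1,
      depth (tau m.+1 a1) m.+1 <= 3,
      genus (tau m.+1 a1) = g.+1 &
   [/\ is_gapset_filtration m.+1 a2,
      is_multiplicity (tau m.+1 a2) m.+1,
      depth (tau m.+1 a2) m.+1 <= 3 &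
      genus (tau m.+1 a2) = g.+2]].
Proof.
move=> m_gt0 -> F1_sub F2_sub G_gapset /=.
have F2_splits : splits_in F2 F1 := gapset_splits (fsubset_trans F2_sub F1_sub) G_gapset.
have F1_range : F1 `<=` interval 1 m.
  by apply/fsubsetP => z /(fsubsetP F1_sub); rewrite !mem_interval; lia.
have F1m_range : F1 `|` [fset m] `<=` interval 1 m.
  by rewrite fsubUset F1_range fsub1set mem_interval m_gt0 leqnn.
have m_notin_F1 : m \notin F1.
  by apply/negP => /(fsubsetP F1_sub); rewrite mem_interval; lia.
have -> : interval 1 m.-1 `|` [fset m] = interval 1 m.
  by apply/fsetP => z; rewrite in_fsetU in_fset1 !mem_interval; apply/idP/idP; lia.
have [a1_filt a1_mult a1_depth ->] := lift_gapset_filtration F1_range F2_sub F2_splits.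
have [a2_filt a2_mult a2_depth ->] := lift_gapset_filtration F1m_range
  (fsubset_trans F2_sub (fsubsetUl _ _)) (splits_inS (fsubsetUl _ _) F2_splits).
have card_F1m : #|` F1 `|` [fset m]| = #|` F1|.+1.
  by rewrite fsetUC cardfsU1 m_notin_F1.
rewrite card_F1m card_interval subn1 /=.
split=> //; first by rewrite -!addSn prednK.
by split=> //; rewrite addnS addSn -!addSn prednK.
Qed.
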